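(* Let $(P,w)$ be a naturally labeled poset with $n$ elements and let $\alpha$ be a composition of $n$. Then $$\sum_{\sigma\in\mathcal L_\alpha(P,w)}(-1)^{|\mathrm{Des}(\sigma)\setminus S_\alpha|}=|\mathcal L^*_\alpha(P,w)|.$$ In particular the left-hand side is nonnegative.
   Context: A composition $\alpha=(\alpha_1,\dots,\alpha_\ell)$ of $n$ is a sequence of positive integers summing to $n$; $S_\alpha=\{\alpha_1,\alpha_1+\alpha_2,\dots,\alpha_1+\dots+\alpha_{\ell-1}\}$; blocks $B_i(\alpha)=\{\alpha_1+\dots+\alpha_{i-1}+1,\dots,\alpha_1+\dots+\alpha_i\}$. A permutation $\sigma\in\mathfrak S_n$ (one-line notation) is $\alpha$-unimodal if for each $i$, writing $B_i(\alpha)=[a,b]$, there is $k\in[a,b]$ with $\sigma_a>\dots>\sigma_k<\dots<\sigma_b$. $\mathrm{Des}(\sigma)=\{i\in[n-1]:\sigma_i>\sigma_{i+1}\}$. A labeled poset $(P,w)$ is a finite poset $P$ with a bijection $w:P\to[n]$; it is naturally labeled if $x<_Py$ implies $w(x)<w(y)$. $\mathcal L(P,w)=\{\sigma\in\mathfrak S_n: \sigma^{-1}(w(x))<\sigma^{-1}(w(y))\text{ whenever }x<_Py\}$. $\mathcal L_\alpha(P,w)$ is the set of $\alpha$-unimodal $\sigma\in\mathcal L(P,w)$. For $\sigma\in\mathfrak S_n$ let $P_i^\alpha(\sigma)=\{w^{-1}(\sigma_j):j\in B_i(\alpha)\}$ with the induced order. $\mathcal L^*_\alpha(P,w)$ is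 the set of $\sigma\in\mathcal L_\alpha(P,w)$ such that $P_i^\alpha(\sigma)$ has a unique minimal element for every $i$. *)

From HB Require Import structures.
From mathcomp Require Import all_boot all_order all_algebra all_fingroup.
Set Implicit Arguments. Unset Strict Implicit. Unset Printing Implicit Defensive.

(* Conventions: positions in one-line notation are 1-indexed (1..n) as in the
   paper; labels are elements of 'I_n, i.e. [n] is represented by {0,...,n-1}
   (a harmless shift). A permutation s : 'S_n has one-line entry
   sigma_j = val (s (j-1)) for 1 <= j <= n. *)

Section Defs.
Variable n : nat.

Definition oneline (s : 'S_n) (j : nat) : nat :=
  nth 0 [seq val (s i) | i <- enum 'I_n] j.-1.

Definition is_composition (al : seq nat) : bool :=
  all (fun a => 0 < a) al && (sumn al == n).

Definition S_alpha (al : seq nat) : seq nat :=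
  [seq sumn (take i al) | i <- iota 1 (size al).-1].

(* Block B_{i+1}(alpha) = [blk_lo i, blk_hi i] for 0 <= i < size al. *)
Definition blk_lo (al : seq nat) (i : nat) : nat := (sumn (take i al)).+1.
Definition blk_hi (al : seq nat) (i : nat) : nat := sumn (take i.+1 al).
Definition in_block (al : seq nat) (i j : nat) : bool :=
  (blk_lo al i <= j) && (j <= blk_hi al i).

Definition Des (s : 'S_n) : seq nat :=
  [seq i <- iota 1 n.-1 | oneline s i.+1 < oneline s i].

Definition des_out (al : seq nat) (s : 'S_n) : nat :=
  count (fun i => i \notin S_alpha al) (Des s).

Definition unimodal (al : seq nat) (s : 'S_n) : bool :=
  all (fun i =>
    [exists k : 'I_n.+1,
      (blk_lo al i <= k <= blk_hi al i) &&
      [forall j : 'I_n.+1,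
        ((blk_lo al i <= j < k) ==> (oneline s j.+1 < oneline s j)) &&
        ((k <= j < blk_hi al i) ==> (oneline s j < oneline s j.+1))]])
    (iota 0 (size al)).

Variables (d : Order.disp_t) (T : finPOrderType d) (w : T -> 'I_n).

Definition natural_labeling : Prop :=
  forall x y : T, (x < y)%O -> w x < w y.

Definition linext (s : 'S_n) : bool :=
  [forall x : T, forall y : T, (x < y)%O ==> (val ((s^-1)%g (w x)) < val ((s^-1)%g (w y)))].

Definition inLalpha (al : seq nat) (s : 'S_n) : bool := linext s && unimodal al s.

Definition Pblock (al : seq nat) (s : 'S_n) (i : nat) : {set T} :=
  [set x : T | [exists j : 'I_n, in_block al i j.+1 && (s j == w x)]].

Definition minimal_in (A : {set T}) (x : T) : bool :=
  (x \in A) && [forall z : T, (z \in A) ==> ~~ (z < x)%O].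

Definition unique_min (A : {set T}) : bool :=
  [exists x : T, minimal_in A x && [forall y : T, minimal_in A y ==> (y == x)]].

Definition inLstar (al : seq nat) (s : 'S_n) : bool :=
  inLalpha al s && all (fun i => unique_min (Pblock al s i)) (iota 0 (size al)).

End Defs.

From HB Require Import structures.
From mathcomp Require Import all_boot all_order all_algebra all_fingroup.
From mathcomp Require Import zify.
Set Implicit Arguments. Unset Strict Implicit. Unset Printing Implicit Defensive.

(* A sign-reversing involution.  In an alpha-unimodal linear extension every
   block is a valley: its labels decrease down to the least label of the block
   and then increase.  The least label is a minimal element of the block, and
   so is every label of the decreasing run, since a predecessor carries a
   smaller label and would have to occur earlier in that run.  If the block has
   another minimal element t, move t to the other side of the valley and
   re-sort both sides: the word stays a linear extension, the number of
   descents inside the block changes by one, and doing it twice gives back the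
   block.  Performed on the first block without a unique minimal element, this
   cancels L_alpha \ L*_alpha in pairs of opposite signs; on L*_alpha every
   block has its valley in front, hence no descent outside S_alpha. *)

Section SignReversingInvolution.
Import GRing.Theory.
Variables (S : finType) (A B : pred S) (f : S -> nat) (g : S -> S).
Hypothesis gK : involutive g.
Hypothesis gA : forall s, A s -> A (g s).
Hypothesis BA : subpred B A.
Hypothesis gB : forall s, B s -> g s = s.
Hypothesis fB : forall s, B s -> f s = 0.
Hypothesis odd_g : forall s, A s -> ~~ B s -> odd (f (g s)) = ~~ odd (f s).

Lemma involution_off_fixed s : A s && ~~ B s -> A (g s) && ~~ B (g s).
Proof.
case/andP=> As nBs; rewrite gA //=; apply/negP=> /gB gs_fixed.
have gs : g s = s by rewrite -[in RHS](gK s) gs_fixed.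
by move: (odd_g As nBs); rewrite gs; case: (odd (f s)).
Qed.

Lemma sum_sign_involution :
  (\sum_(s | A s) (-1) ^+ f s : int)%R = Posz #|[set s | B s]|.
Proof.
rewrite (bigID B) /=.
set X := (\sum_(s | A s && ~~ B s) _)%R.
have X0 : X = 0%R.
  have XN : X = (- X)%R.
    rewrite {1}/X (reindex_inj (can_inj gK)) /= -sumrN.
    apply: eq_big => [s|s /involution_off_fixed]; last rewrite gK => /andP[As nBs].
      apply/idP/idP => [h|]; last exact: involution_off_fixed.
      by rewrite -[s]gK; apply: involution_off_fixed.
    rewrite -signr_odd odd_g // -[in RHS]signr_odd.
    by case: (odd (f s)); rewrite ?expr0 ?expr1 ?opprK.
  by move: XN; lia.
rewrite X0 addr0 (eq_bigr (fun _ => 1%R)) => [|s /andP[_ /fB->]] //.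
rewrite (eq_bigl (fun s => s \in [set s | B s])) ?sumr_const ?natz // => s.
by rewrite in_set andb_idl //; apply: BA.
Qed.

End SignReversingInvolution.

Definition valley_at (c : seq nat) k :=
  (k < size c) && sorted gtn (take k.+1 c) && sorted ltn (drop k c).

Definition descents (c : seq nat) :=
  count (fun r => nth 0 c r.+1 < nth 0 c r) (iota 0 (size c).-1).

Lemma gtn_trans : transitive gtn.
Proof. exact: rev_trans ltn_trans. Qed.

Lemma valley_at_min c k : valley_at c k -> forall r, r < size c -> nth 0 c k <= nth 0 c r.
Proof.
case/andP=> [/andP[hk dec] inc] r hr.
case: (ltngtP r k) => [hrk | hkr | ->]; last by [].
- have := sorted_ltn_nth gtn_trans 0 dec r k.
  rewrite !inE size_takel // ltnS (ltnW hrk) leqnn => /(_ isT isT hrk) /=.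
  by rewrite !nth_take ?ltnS ?(ltnW hrk) // => /ltnW.
- have := sorted_ltn_nth ltn_trans 0 inc 0 (r - k).
  rewrite !inE size_drop subn_gt0 hk ltn_sub2r // subn_gt0 => /(_ isT isT hkr).
  by rewrite !nth_drop addn0 subnKC ?(ltnW hkr) // => /ltnW.
Qed.

Lemma descents_valley c k : valley_at c k -> descents c = k.
Proof.
case/andP=> [/andP[hk dec] inc].
have hsz : (size c).-1 = k + ((size c).-1 - k) by lia.
rewrite /descents hsz iotaD count_cat add0n.
rewrite (eq_in_count (a2 := predT)) ?count_predT ?size_iota; last first.
  move=> r; rewrite mem_iota add0n => /andP[_ hr] /=.
  move/sortedP: dec => /(_ 0 r); rewrite size_takel // ltnS => /(_ hr).
  by rewrite !nth_take // ltnS // (ltnW hr).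
rewrite (eq_in_count (a2 := pred0)) ?count_pred0 ?addn0 // => r.
rewrite mem_iota => /andP[hkr hr] /=.
move/sortedP: inc => /(_ 0 (r - k)); rewrite size_drop.
have hr1 : r.+1 < size c by lia.
rewrite -subSn // ltn_sub2r // => /(_ isT).
by rewrite !nth_drop !subnKC // ?(leqW hkr) // ltnNge => /ltnW ->.
Qed.

Lemma count_addb1 (X : eqType) (p : pred X) t s : uniq s -> t \in s ->
  odd (count (fun x => p x (+) (x == t)) s) = ~~ odd (count p s).
Proof.
move=> us ts; case/splitPr: ts us => s1 s2.
rewrite cat_uniq /= => /and4P[_ hn tn _].
have tn1 : t \notin s1 by apply/negP=> h; move: hn; rewrite /= h.
have eq_off s' : t \notin s' -> count (fun x => p x (+) (x == t)) s' = count p s'.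
  move=> tns; apply: eq_in_count => x xs /=.
  by rewrite (_ : x == t = false) ?addbF //; apply: contraNF tns => /eqP <-.
rewrite !count_cat /= !eq_off // eqxx !oddD.
by case: (p t); case: (odd (count p s1)); case: (odd (count p s2)).
Qed.

Section ValleyToggle.
Variable n : nat.
Variable prec : rel 'I_n.
Hypothesis prec_lt : forall a c, prec a c -> a < c.

Definition ord_leq : rel 'I_n := fun a c => a <= c.

Lemma ord_leq_total : total ord_leq. Proof. by move=> a c; exact: leq_total. Qed.
Lemma ord_leq_trans : transitive ord_leq. Proof. by move=> a c e; exact: leq_trans. Qed.
Lemma ord_leq_anti : antisymmetric ord_leq.
Proof. by move=> a c h; apply: val_inj; apply/eqP; rewrite eqn_leq. Qed.

Definition vshape (X : pred 'I_n) (s : seq 'I_n) :=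
  rev [seq x <- s | X x] ++ [seq x <- s | ~~ X x].

Definition prec_min (b : seq 'I_n) a := (a \in b) && all (fun c => ~~ prec c a) b.

Definition prec_ordered (b : seq 'I_n) :=
  forall a c, a \in b -> c \in b -> prec a c -> index a b < index c b.

Lemma sorted_val_sort (b : seq 'I_n) : uniq b -> sorted ltn (map val (sort ord_leq b)).
Proof.
move=> ub; rewrite ltn_sorted_uniq_leq map_inj_uniq ?sort_uniq //; last exact: val_inj.
by rewrite ub /= sorted_map; exact: (sort_sorted ord_leq_total).
Qed.

Lemma sort_valley_head (b : seq 'I_n) k x0 : uniq b -> valley_at (map val b) k ->
  sort ord_leq b = nth x0 b k :: behead (sort ord_leq b).
Proof.
move=> ub hv; have hk : k < size b by case/andP: hv => /andP[]; rewrite size_map.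
case E: (sort ord_leq b) => [|h t].
  by move: (size_sort ord_leq b); rewrite E /= => h0; move: hk; rewrite -h0.
congr (_ :: _); apply: ord_leq_anti; apply/andP; split.
- have hs := sort_sorted ord_leq_total b; rewrite E /= in hs.
  have hm : nth x0 b k \in h :: t by rewrite -E mem_sort mem_nth.
  rewrite inE in hm; case/orP: hm => [/eqP -> | hm]; first exact: leqnn.
  by rewrite (path_sortedE ord_leq_trans) in hs; case/andP: hs => /allP /(_ _ hm).
- have hh : h \in b by rewrite -(mem_sort ord_leq) E mem_head.
  have := valley_at_min hv (r := index h b); rewrite size_map index_mem hh => /(_ isT).
  by rewrite !(nth_map x0) ?index_mem // nth_index.
Qed.

Lemma perm_vshape X s : perm_eq (vshape X s) s.
Proof.
rewrite /vshape; apply: (@perm_trans _ ([seq x <- s | X x] ++ [seq x <- s | predC X x])).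
  by apply: perm_cat => //; rewrite perm_rev.
exact: (permEl (perm_filterC X s)).
Qed.

Lemma eq_in_vshape (X1 X2 : pred 'I_n) s : {in s, X1 =1 X2} -> vshape X1 s = vshape X2 s.
Proof.
move=> h; rewrite /vshape (eq_in_filter h); congr (_ ++ _).
by apply: eq_in_filter => x xs; rewrite h.
Qed.

Lemma vshape_valley b k : uniq b -> valley_at (map val b) k ->
  b = vshape (mem (take k b)) (sort ord_leq b).
Proof.
move=> ub /andP[/andP[hk dec] inc].
set D := take k b; set R := drop k b.
have hb : b = D ++ R by rewrite cat_take_drop.
have /and3P[uD hDR uR] : [&& uniq D, ~~ has (mem D) R & uniq R] by rewrite -cat_uniq -hb.
have notD x : x \in R -> ~~ (x \in D) by move=> xR; apply/negP=> xD; case/hasP: hDR; exists x.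
have fD : [seq x <- b | x \in D] = D.
  rewrite {1}hb filter_cat (all_filterP (allss D)) (eq_in_filter (a2 := pred0)) ?filter_pred0 ?cats0 //.
  by move=> x /notD /negbTE.
have fR : [seq x <- b | ~~ (x \in D)] = R.
  rewrite {1}hb filter_cat (eq_in_filter (a2 := pred0)) ?filter_pred0; last by move=> x /= ->.
  by apply/all_filterP/allP.
have sR : sorted ord_leq R.
  move: inc; rewrite -map_drop sorted_map => inc.
  by apply: sub_sorted inc => a c /=; exact: ltnW.
have sD : sorted ord_leq (rev D).
  rewrite rev_sorted.
  have : sorted gtn (take k (take k.+1 (map val b))) by exact: take_sorted.
  rewrite take_takel // -map_take sorted_map => h.
  by apply: sub_sorted h => a c /=; exact: ltnW.
rewrite /vshape !filter_sort ?fD ?fR; try exact: ord_leq_total; try exact: ord_leq_trans.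
rewrite (sorted_sort ord_leq_trans sR).
suff -> : sort ord_leq D = rev D by rewrite revK.
apply: (sorted_eq ord_leq_trans ord_leq_anti (sort_sorted ord_leq_total _) sD).
by rewrite perm_sort perm_sym perm_rev.
Qed.

Lemma valley_vshape s X m s' : s = m :: s' -> uniq s -> sorted ord_leq s -> ~~ X m ->
  valley_at (map val (vshape X s)) (count X s).
Proof.
move=> -> us ss nXm.
have sv : sorted ltn (map val (m :: s')).
  by rewrite ltn_sorted_uniq_leq (map_inj_uniq val_inj) us sorted_map.
move: (sv); rewrite /= (path_sortedE ltn_trans) => /andP[allm sv'].
rewrite /vshape /= (negbTE nXm) /= -size_filter map_cat map_rev /=.
set A := map val [seq x <- s' | X x]; set B := map val [seq x <- s' | ~~ X x].
have filtered_above_m (Y : pred 'I_n) :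
    sorted ltn (map val [seq x <- s' | Y x]) && all (ltn (val m)) (map val [seq x <- s' | Y x]).
  apply/andP; split.
    by apply: (subseq_sorted ltn_trans _ sv'); apply: map_subseq; exact: filter_subseq.
  apply/allP=> x /mapP[y]; rewrite mem_filter => /andP[_ ys] ->.
  by move/allP: allm; apply; exact: map_f.
have /andP[sA aA] := filtered_above_m X.
have /andP[sB aB] := filtered_above_m (fun x => ~~ X x).
rewrite -(size_map val) -/A /valley_at size_cat size_rev /= addnS ltnS leq_addr /=.
rewrite take_cat size_rev ltnNge leqnSn /= subSnn /= take0 drop_cat size_rev ltnn subnn drop0.
apply/andP; split; last by rewrite /= path_min_sorted.
by rewrite -[rev A ++ _]/(rev A ++ rev [:: val m]) -rev_cat rev_sorted /= path_min_sorted.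
Qed.

Lemma index_sorted_lt (s : seq 'I_n) a c : sorted ltn (map val s) -> a \in s -> c \in s ->
  a < c -> index a s < index c s.
Proof.
move=> ss aS cS hac; rewrite ltnNge leq_eqVlt; apply/negP => /orP[/eqP e | h].
  have : nth a s (index c s) = nth a s (index a s) by rewrite e.
  by rewrite !nth_index // => ec; move: hac; rewrite ec ltnn.
have := sorted_ltn_nth ltn_trans 0 ss (index c s) (index a s).
rewrite !inE size_map !index_mem aS cS => /(_ isT isT h).
rewrite !(nth_map a) ?index_mem // !nth_index // => /= hca.
by move: (ltn_trans hac hca); rewrite ltnn.
Qed.

Lemma index_take_lt (b : seq 'I_n) k a : a \in take k b -> index a b < k.
Proof.
move=> aD; rewrite -{1}(cat_take_drop k b) index_cat aD.
by apply: (leq_trans (n := size (take k b))); rewrite ?index_mem // size_take_min geq_minl.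
Qed.

Lemma valley_prefix_min b k : uniq b -> valley_at (map val b) k -> prec_ordered b ->
  forall a, a \in take k b -> prec_min b a.
Proof.
move=> ub hv hord a aD.
have ab : a \in b by rewrite -(cat_take_drop k b) mem_cat aD.
have ia := index_take_lt aD.
rewrite /prec_min ab /=; apply/allP=> c cb; apply/negP=> pca.
have ic := hord _ _ cb ab pca.
case/andP: hv => [/andP[hk dec] _].
have := sorted_ltn_nth gtn_trans 0 dec (index c b) (index a b).
rewrite !inE size_takel // !ltnS (ltnW ia) (ltnW (ltn_trans ic ia)) => /(_ isT isT ic) /=.
rewrite !nth_take ?ltnS ?(ltnW ia) ?(ltnW (ltn_trans ic ia)) //.
rewrite !(nth_map a) ?index_mem // !nth_index // => hac.
by move: (ltn_trans (prec_lt pca) hac); rewrite ltnn.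
Qed.

Lemma vshape_prec_ordered b (X : pred 'I_n) : uniq b ->
  (forall a, a \in b -> X a -> prec_min b a) -> prec_ordered (vshape X (sort ord_leq b)).
Proof.
move=> ub hX a c; rewrite !(perm_mem (perm_vshape X _)) !mem_sort => ab cb pac.
have nXc : ~~ X c.
  by apply/negP=> Xc; case/andP: (hX c cb Xc) => _ /allP /(_ a ab); rewrite pac.
have cR : c \in [seq x <- sort ord_leq b | ~~ X x] by rewrite mem_filter nXc mem_sort.
have cL : c \notin rev [seq x <- sort ord_leq b | X x] by rewrite mem_rev mem_filter negb_and nXc.
rewrite /vshape !index_cat (negbTE cL).
case Xa : (X a).
  have aL : a \in rev [seq x <- sort ord_leq b | X x] by rewrite mem_rev mem_filter Xa mem_sort.
  by rewrite aL; apply: (leq_trans (n := size (rev [seq x <- sort ord_leq b | X x])));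
    rewrite ?leq_addr // index_mem.
have aL : a \notin rev [seq x <- sort ord_leq b | X x] by rewrite mem_rev mem_filter Xa.
rewrite (negbTE aL) ltn_add2l; apply: index_sorted_lt.
- apply: (subseq_sorted ltn_trans _ (sorted_val_sort ub)).
  by apply: map_subseq; exact: filter_subseq.
- by rewrite mem_filter Xa mem_sort.
- exact: cR.
- exact: prec_lt.
Qed.

Definition least (b : seq 'I_n) x := head x (sort ord_leq b).

Lemma least_perm b1 b2 x : perm_eq b1 b2 -> least b1 x = least b2 x.
Proof.
move=> hp; rewrite /least; congr head.
by apply/(perm_sortP ord_leq_total ord_leq_trans ord_leq_anti).
Qed.

Lemma least_valley b k t : uniq b -> valley_at (map val b) k ->
  least b t = nth t b k /\ index (least b t) b = k.
Proof.
move=> ub hv; have hk : k < size b by case/andP: hv => /andP[]; rewrite size_map.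
rewrite /least (sort_valley_head t ub hv) /=; split=> //; exact: index_uniq.
Qed.

Lemma valley_prec_min b k t : uniq b -> valley_at (map val b) k -> prec_min b (nth t b k).
Proof.
move=> ub hv; have hk : k < size b by case/andP: hv => /andP[]; rewrite size_map.
rewrite /prec_min mem_nth //=; apply/allP=> c cb; apply/negP=> /prec_lt hc.
have := valley_at_min hv (r := index c b); rewrite size_map index_mem cb => /(_ isT).
rewrite !(nth_map t) ?index_mem // nth_index // => h.
by move: (leq_trans hc h); rewrite ltnn.
Qed.

Lemma unique_prec_min_valley0 b k (t : 'I_n) : uniq b -> valley_at (map val b) k ->
  prec_ordered b -> (forall a c, prec_min b a -> prec_min b c -> a = c) -> k = 0.
Proof.
move=> ub hv hord huniq; case: (posnP k) => // kpos; exfalso.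
have hk : k < size b by case/andP: hv => /andP[]; rewrite size_map.
have a0D : nth t b 0 \in take k b.
  by rewrite -(nth_take t kpos) mem_nth // size_takel // ltnW.
have := huniq _ _ (valley_prefix_min ub hv hord a0D) (valley_prec_min t ub hv).
by move/eqP; rewrite nth_uniq // ?(ltn_trans kpos) // eq_sym (gtn_eqF kpos).
Qed.

(* The toggle moves [t] between the decreasing and the increasing side of the
   valley, keeping every other element on its side. *)
Definition descent_part b x := take (index (least b x) b) b.
Definition toggle_set b t : pred 'I_n := fun x => (x \in descent_part b t) (+) (x == t).
Definition toggle b t := vshape (toggle_set b t) (sort ord_leq b).

Lemma perm_toggle b t : perm_eq (toggle b t) b.
Proof. by rewrite /toggle (perm_trans (perm_vshape _ _)) // perm_sort. Qed.

Section Toggle.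
Variables (b : seq 'I_n) (k : nat) (t : 'I_n).
Hypotheses (ub : uniq b) (hv : valley_at (map val b) k) (hord : prec_ordered b).
Hypotheses (t_min : prec_min b t) (t_least : t != least b t).

Lemma descent_partE : descent_part b t = take k b.
Proof. by rewrite /descent_part (least_valley t ub hv).2. Qed.

Lemma sort_least : sort ord_leq b = least b t :: behead (sort ord_leq b).
Proof. by rewrite (least_valley t ub hv).1; exact: sort_valley_head. Qed.

Lemma least_notin_descent : least b t \notin take k b.
Proof. by apply/negP=> /index_take_lt; rewrite (least_valley t ub hv).2 ltnn. Qed.

Lemma valley_toggle :
  valley_at (map val (toggle b t)) (count (toggle_set b t) (sort ord_leq b)).
Proof.
apply: (valley_vshape sort_least); first by rewrite sort_uniq.
  exact: (sort_sorted ord_leq_total).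
by rewrite /toggle_set descent_partE (negbTE least_notin_descent) /= eq_sym (negbTE t_least).
Qed.

Lemma toggle_prec_ordered : prec_ordered (toggle b t).
Proof.
apply: vshape_prec_ordered => // a ab; rewrite /toggle_set descent_partE.
case aD: (a \in take k b) => /=; last by move/eqP ->.
by move=> _; exact: (valley_prefix_min ub hv hord aD).
Qed.

Lemma toggleK : toggle (toggle b t) t = b.
Proof.
set b' := toggle b t.
have ub' : uniq b' by rewrite (perm_uniq (perm_toggle b t)).
have sort_b' : sort ord_leq b' = sort ord_leq b.
  by apply/(perm_sortP ord_leq_total ord_leq_trans ord_leq_anti); exact: perm_toggle.
have descent_b' : descent_part b' t = rev [seq x <- sort ord_leq b | toggle_set b t x].
  rewrite /descent_part (least_valley t ub' valley_toggle).2 /b' /toggle /vshape.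
  by rewrite take_size_cat // size_rev size_filter.
rewrite /toggle sort_b' {2}(vshape_valley ub hv); apply: eq_in_vshape => x xs.
rewrite /toggle_set descent_b' mem_rev mem_filter xs andbT /toggle_set descent_partE.
by rewrite -addbA addbb addbF.
Qed.

Lemma odd_toggle : odd (count (toggle_set b t) (sort ord_leq b)) = ~~ odd k.
Proof.
have hv0 : valley_at (map val b) (count (mem (take k b)) (sort ord_leq b)).
  rewrite [in map _ _](vshape_valley ub hv).
  apply: (valley_vshape sort_least); first by rewrite sort_uniq.
    exact: (sort_sorted ord_leq_total).
  exact: least_notin_descent.
rewrite /toggle_set count_addb1 ?sort_uniq ?mem_sort //; last by case/andP: t_min.
by rewrite descent_partE -(descents_valley hv0) (descents_valley hv).
Qed.
End Toggle.
End ValleyToggle.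

(* Block [i] (counted from 0) occupies positions [blk_start i + 1 .. blk_start i + blk_size i]. *)
Definition blk_start (al : seq nat) i := sumn (take i al).
Definition blk_size (al : seq nat) i := nth 0 al i.

Lemma blk_startS (al : seq nat) i : i < size al -> blk_start al i.+1 = blk_start al i + blk_size al i.
Proof. by move=> hi; rewrite /blk_start (take_nth 0 hi) -cats1 sumn_cat /= addn0. Qed.

Lemma blk_start_mono (al : seq nat) i j : i <= j -> blk_start al i <= blk_start al j.
Proof.
move=> hij; rewrite /blk_start -(cat_take_drop i (take j al)) take_takel // sumn_cat.
exact: leq_addr.
Qed.

Lemma blocks_disjoint (al : seq nat) i j : i < size al -> j < size al -> j != i ->
  (blk_start al j + blk_size al j <= blk_start al i) ||
  (blk_start al i + blk_size al i <= blk_start al j).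
Proof.
move=> hi hj nji; case: (ltngtP j i) => hji; last by rewrite hji eqxx in nji.
- by rewrite -(blk_startS hj) (blk_start_mono _ hji).
- by rewrite -(blk_startS hi) (blk_start_mono _ hji) orbT.
Qed.

Section Composition.
Variables (n : nat) (al : seq nat).
Hypothesis comp : is_composition n al.

Lemma blk_size_gt0 i : i < size al -> 0 < blk_size al i.
Proof. by case/andP: comp => /allP hp _ hi; apply: hp; exact: mem_nth. Qed.

Lemma blk_start_over i : size al <= i -> blk_start al i = n.
Proof. by case/andP: comp => _ /eqP <- h; rewrite /blk_start take_oversize. Qed.

Lemma blk_end_leq i : i < size al -> blk_start al i + blk_size al i <= n.
Proof.
by move=> hi; rewrite -blk_startS // -(blk_start_over (leqnn _)); apply: blk_start_mono.
Qed.

Lemma S_alpha_blk_start p : p \in S_alpha al -> exists2 j, 0 < j < size al & p = blk_start al j.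
Proof.
rewrite /S_alpha => /mapP[j]; rewrite mem_iota => /andP[h1 h2] ->; exists j => //.
by move: h1 h2; case: (size al) => [|m] /=; lia.
Qed.

Lemma blk_start_S_alpha j : 0 < j < size al -> blk_start al j \in S_alpha al.
Proof.
move=> /andP[h1 h2]; apply/mapP; exists j => //; rewrite mem_iota.
by move: h1 h2; case: (size al) => [|m] /=; lia.
Qed.

Lemma interior_notin_S_alpha i p : i < size al ->
  blk_start al i < p < blk_start al i + blk_size al i -> p \notin S_alpha al.
Proof.
move=> hi /andP[h1 h2]; apply/negP=> /S_alpha_blk_start[j /andP[_ hj] ej].
case: (leqP j i) => hji; first by move: h1; rewrite ej ltnNge blk_start_mono.
by move: h2; rewrite ej -blk_startS // ltnNge blk_start_mono.
Qed.

Lemma notin_S_alpha_interior p : 0 < p < n -> p \notin S_alpha al ->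
  exists2 i, i < size al & blk_start al i < p < blk_start al i + blk_size al i.
Proof.
move=> /andP[hp0 hpn] hS.
have ex : exists j, p < blk_start al j by exists (size al); rewrite blk_start_over.
case: (ex_minnP ex) => [[|i]] hj hmin; first by move: hj; rewrite /blk_start take0.
have hi : i < size al.
  rewrite ltnNge; apply/negP=> hs; move: (hmin i); rewrite blk_start_over // hpn.
  by move/(_ isT); rewrite ltnn.
exists i => //; rewrite -blk_startS // hj andbT.
have hle : blk_start al i <= p by rewrite leqNgt; apply/negP=> /hmin; rewrite ltnn.
rewrite ltn_neqAle hle andbT; apply/eqP=> e.
case: i hi hj hmin hle e => [|i] hi hj hmin hle e.
  by move: hp0; rewrite -e /blk_start take0.
by move: hS; rewrite -e blk_start_S_alpha.
Qed.
End Composition.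

Definition splice (X : Type) (L : seq X) l a (b : seq X) := take l L ++ b ++ drop (l + a) L.

Lemma splice_take_drop (X : Type) (L : seq X) l a : splice L l a (take a (drop l L)) = L.
Proof. by rewrite /splice addnC -drop_drop !cat_take_drop. Qed.

Lemma map_splice (X Y : Type) (f : X -> Y) L l a b :
  map f (splice L l a b) = splice (map f L) l a (map f b).
Proof. by rewrite /splice !map_cat map_take map_drop. Qed.

Lemma perm_splice (X : eqType) (L b : seq X) l a : perm_eq b (take a (drop l L)) ->
  perm_eq (splice L l a b) L.
Proof. by move=> hb; rewrite -{2}(splice_take_drop L l a) /splice perm_cat2l perm_cat2r. Qed.

Section Splice.
Variables (X : Type) (L b : seq X) (l a : nat).
Hypotheses (hla : l + a <= size L) (hb : size b = a).

Lemma size_splice : size (splice L l a b) = size L.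
Proof. rewrite /splice !size_cat size_takel ?size_drop ?hb; lia. Qed.

Lemma nth_splice_out x q : ~~ (l <= q < l + a) -> nth x (splice L l a b) q = nth x L q.
Proof.
move=> hq; rewrite /splice nth_cat size_takel; last lia.
case: ltnP => h1; first by rewrite nth_take.
rewrite nth_cat hb; case: ltnP => h2; first lia.
by rewrite nth_drop; congr nth; lia.
Qed.

Lemma take_drop_splice : take a (drop l (splice L l a b)) = b.
Proof.
rewrite /splice drop_cat size_takel; last lia.
by rewrite ltnn subnn drop0 take_cat hb ltnn subnn take0 cats0.
Qed.

Lemma take_drop_splice_disjoint (x0 : X) l2 a2 : l2 + a2 <= size L ->
  (l2 + a2 <= l) || (l + a <= l2) ->
  take a2 (drop l2 (splice L l a b)) = take a2 (drop l2 L).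
Proof.
move=> h2 hd; apply: (@eq_from_nth _ x0).
  by rewrite !size_takel ?size_drop ?size_splice //; lia.
move=> r; rewrite size_takel ?size_drop ?size_splice => [hr|]; last lia.
rewrite !nth_take; [|lia|lia]; rewrite !nth_drop nth_splice_out //; lia.
Qed.

Lemma splice_splice b2 : splice (splice L l a b) l a b2 = splice L l a b2.
Proof.
rewrite /splice take_size_cat ?size_takel //; try lia.
by rewrite (catA (take l L) b) drop_size_cat // size_cat size_takel ?hb //; lia.
Qed.
End Splice.

Lemma nth_take_drop (V : seq nat) l a r : r < a -> nth 0 (take a (drop l V)) r = nth 0 V (l + r).
Proof. by move=> hr; rewrite nth_take // nth_drop. Qed.

Lemma size_take_drop (X : Type) (V : seq X) l a : l + a <= size V ->
  size (take a (drop l V)) = a.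
Proof. by move=> h; rewrite size_takel // size_drop; lia. Qed.

Lemma index_mid (X : eqType) (p c q : seq X) x : uniq (p ++ c ++ q) -> x \in c ->
  index x (p ++ c ++ q) = size p + index x c.
Proof.
move=> u xc; rewrite index_cat; case: ifP => xp; last by rewrite index_cat xc.
by move: u; rewrite cat_uniq => /and3P[_ /hasP[]]; exists x => //; rewrite mem_cat xc.
Qed.

Lemma index_replace_mid (X : eqType) (p c c' q : seq X) a z : c =i c' -> size c = size c' ->
  (a \in c -> z \in c -> index a c' < index z c') ->
  index a (p ++ c ++ q) < index z (p ++ c ++ q) ->
  index a (p ++ c' ++ q) < index z (p ++ c' ++ q).
Proof.
move=> ec sc hin; rewrite !index_cat -!ec.
have bc x : x \in c -> index x c < size c by rewrite index_mem.
have bc' x : x \in c -> index x c' < size c by rewrite sc index_mem ec.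
have bp x : x \in p -> index x p < size p by rewrite index_mem.
move: (bp a) (bp z) (bc a) (bc z) (bc' a) (bc' z) hin.
case: (a \in p); case: (z \in p); case: (a \in c); case: (z \in c) => /=; rewrite -?sc;
  intros; repeat match goal with H : is_true true -> _ |- _ => specialize (H isT) end; lia.
Qed.

Lemma count_andC (X : Type) (f q : pred X) s :
  count f s = count (fun x => f x && q x) s + count (fun x => f x && ~~ q x) s.
Proof. by elim: s => //= x s ->; case: (f x); case: (q x) => /=; lia. Qed.

Lemma count_iota_window (f : nat -> bool) N l a : 0 < a -> l + a <= N ->
  count (fun p => (l < p < l + a) && f p) (iota 1 N.-1) = count f (iota l.+1 a.-1).
Proof.
move=> ha hla.
have -> : N.-1 = l + (a.-1 + (N - l - a)) by lia.
rewrite iotaD iotaD !count_cat.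
rewrite (eq_in_count (a2 := pred0)); last first.
  by move=> p; rewrite mem_iota => hp; apply/negbTE; apply/negP=> /andP[h _]; lia.
rewrite [X in _ + (_ + X)](eq_in_count (a2 := pred0)); last first.
  by move=> p; rewrite mem_iota => hp; apply/negbTE; apply/negP=> /andP[h _]; lia.
rewrite !count_pred0 add0n addn0 add1n; apply: eq_in_count => p; rewrite mem_iota => hp.
by have -> : (l < p < l + a) = true by apply/idP; lia.
Qed.

(* The shape of the unimodality condition in [unimodal], on a window of [V]. *)
Lemma unimodal_window_valley n (V : seq nat) l a : size V = n -> l + a <= n -> 0 < a ->
 [exists K : 'I_n.+1, (l < K <= l + a) && [forall j : 'I_n.+1,
    ((l < j < K) ==> (nth 0 V j < nth 0 V j.-1)) &&
    ((K <= j < l + a) ==> (nth 0 V j.-1 < nth 0 V j))]]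
 = [exists k : 'I_n.+1, valley_at (take a (drop l V)) k].
Proof.
move=> hV hla ha.
have hla' : l + a <= size V by rewrite hV.
have sc := size_take_drop hla'.
apply/existsP/existsP.
- case=> K /andP[/andP[hK1 hK2] /forallP hj].
  exists (inord (K - l.+1)); rewrite /valley_at inordK; last lia.
  rewrite sc; apply/andP; split; first (apply/andP; split); first lia.
  + apply/(sortedP 0) => r; rewrite size_takel ?sc; last lia.
    move=> hr; rewrite !nth_take; try lia; rewrite !nth_drop.
    have := hj (inord (l + r.+1)); rewrite inordK; last lia.
    case/andP=> h _; move: h; have -> : (l < l + r.+1 < K) = true by apply/idP; lia.
    by rewrite addnS /=.
  + apply/(sortedP 0) => r; rewrite size_drop sc => hr.
    rewrite !nth_drop !nth_take_drop; try lia.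
    have := hj (inord (K + r)); rewrite inordK; last lia.
    case/andP=> _; have -> : (K <= K + r < l + a) = true by apply/idP; lia.
    have -> : (K + r).-1 = l + (K - l.+1 + r) by lia.
    by have -> : K + r = l + (K - l.+1 + r.+1) by lia.
- case=> k /andP[/andP[hk h1] h2]; rewrite sc in hk.
  exists (inord (l + k).+1); rewrite inordK; last lia.
  apply/andP; split; first (apply/andP; split); [lia|lia|].
  apply/forallP=> j; apply/andP; split; apply/implyP=> hj.
  + move/(sortedP 0): h1 => /(_ (j - l.+1)); rewrite size_takel ?sc; last lia.
    move=> h; have := h ltac:(lia); rewrite !nth_take; try lia; rewrite !nth_drop.
    have -> : l + (j - l.+1) = j.-1 by lia.
    by have -> : l + (j - l.+1).+1 = j by lia.
  + move/(sortedP 0): h2 => /(_ (j - (l + k).+1)); rewrite size_drop sc.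
    move=> h; have := h ltac:(lia); rewrite !nth_drop !nth_take_drop; try lia.
    have -> : l + (k + (j - (l + k).+1)) = j.-1 by lia.
    by have -> : l + (k + (j - (l + k).+1).+1) = j by lia.
Qed.

Section Words.
Variable n : nat.

Definition word (s : 'S_n) := map s (enum 'I_n).
Definition oneline_seq (s : 'S_n) := [seq val (s i) | i <- enum 'I_n].

Lemma oneline_seqE s : oneline_seq s = map val (word s).
Proof. by rewrite /oneline_seq /word; elim: (enum _) => //= x l ->. Qed.

Lemma size_word s : size (word s) = n.
Proof. by rewrite size_map size_enum_ord. Qed.

Lemma size_oneline_seq s : size (oneline_seq s) = n.
Proof. by rewrite size_map size_enum_ord. Qed.

Lemma uniq_word s : uniq (word s).
Proof. by rewrite map_inj_uniq ?enum_uniq //; exact: perm_inj. Qed.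

Lemma index_word (s : 'S_n) a : val ((s^-1)%g a) = index a (word s).
Proof. by rewrite -{2}(permKV s a) /word index_map ?index_enum_ord //; exact: perm_inj. Qed.

Lemma mem_take_drop_enum (j : 'I_n) l a :
  (j \in take a (drop l (enum 'I_n))) = (l <= j < l + a).
Proof.
rewrite -(mem_map val_inj) map_take map_drop val_enum_ord drop_iota take_iota mem_iota.
by case: j => j hj /=; lia.
Qed.

(* Junk value: a list that is not a word of length [n] is read as the identity. *)
Definition perm_of_word_fun (L : seq 'I_n) (j : 'I_n) : 'I_n :=
  if uniq L && (size L == n) then nth j L j else j.

Lemma perm_of_word_fun_inj L : injective (perm_of_word_fun L).
Proof.
move=> j1 j2; rewrite /perm_of_word_fun; case: ifP => [/andP[uL /eqP sL]|_] //.
rewrite (set_nth_default j1 j2) ?sL //.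
by move/eqP; rewrite nth_uniq ?sL // => /eqP; exact: val_inj.
Qed.

Definition perm_of_word L : 'S_n := perm (@perm_of_word_fun_inj L).

Lemma wordK s : perm_of_word (word s) = s.
Proof.
apply/permP => j; rewrite permE /perm_of_word_fun uniq_word size_word eqxx /= /word.
by rewrite (nth_map j) ?size_enum_ord // nth_ord_enum.
Qed.

Lemma perm_of_wordK L : uniq L -> size L = n -> word (perm_of_word L) = L.
Proof.
case: L => [|x0 L'] uL sL; first by apply/eqP; rewrite -size_eq0 size_word -sL.
apply: (@eq_from_nth _ x0) => [|r]; first by rewrite size_word sL.
rewrite size_word => hr; rewrite /word (nth_map x0) ?size_enum_ord //.
by rewrite permE /perm_of_word_fun uL sL eqxx /= (set_nth_default x0) ?sL // nth_enum_ord.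
Qed.
End Words.

Section LinearExtensions.
Variables (n : nat) (d : Order.disp_t) (T : finPOrderType d).
Variables (w : T -> 'I_n) (v : 'I_n -> T) (al : seq nat).
Hypotheses (wK : cancel w v) (vK : cancel v w).
Hypothesis natw : natural_labeling w.
Hypothesis comp : is_composition n al.

Definition label_prec : rel 'I_n := fun a c => (v a < v c)%O.

Lemma label_prec_lt a c : label_prec a c -> a < c.
Proof. by move/natw; rewrite !vK. Qed.

Local Notation prec_min := (prec_min label_prec).
Local Notation prec_ordered := (prec_ordered label_prec).

Definition blk (s : 'S_n) i := take (blk_size al i) (drop (blk_start al i) (word s)).

Lemma size_blk s i : i < size al -> size (blk s i) = blk_size al i.
Proof. by move=> hi; apply: size_take_drop; rewrite size_word; exact: (blk_end_leq comp). Qed.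

Lemma uniq_blk s i : uniq (blk s i).
Proof. by rewrite take_uniq // drop_uniq // uniq_word. Qed.

Lemma val_blk s i :
  map val (blk s i) = take (blk_size al i) (drop (blk_start al i) (oneline_seq s)).
Proof. by rewrite map_take map_drop oneline_seqE. Qed.

Lemma word_split s i : word s =
  take (blk_start al i) (word s) ++ blk s i ++ drop (blk_start al i + blk_size al i) (word s).
Proof. by rewrite -/(splice _ _ _ _) splice_take_drop. Qed.

Lemma unimodalE s : unimodal al s =
  all (fun i => [exists k : 'I_n.+1, valley_at (map val (blk s i)) k]) (iota 0 (size al)).
Proof.
apply: eq_in_all => i; rewrite mem_iota add0n => /andP[_ hi].
rewrite val_blk -unimodal_window_valley ?size_oneline_seq ?(blk_size_gt0 comp hi) ?(blk_end_leq comp hi) //.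
by rewrite /blk_hi -/(blk_start al i.+1) (blk_startS hi).
Qed.

Lemma linextE s : linext w s =
  [forall x, forall y, (x < y)%O ==> (index (w x) (word s) < index (w y) (word s))].
Proof. by apply: eq_forallb => x; apply: eq_forallb => y; rewrite !index_word. Qed.

Lemma mem_Pblock s i x : i < size al -> (x \in Pblock w al s i) = (w x \in blk s i).
Proof.
move=> hi; rewrite inE /blk /word -map_drop -map_take.
have blockE (j : nat) : in_block al i j.+1 = (blk_start al i <= j < blk_start al i + blk_size al i).
  by rewrite /in_block /blk_lo /blk_hi -/(blk_start al i) -/(blk_start al i.+1) (blk_startS hi).
apply/existsP/mapP => [[j /andP[hj /eqP e]]|[j]]; first by exists j; rewrite // mem_take_drop_enum -blockE.
by rewrite mem_take_drop_enum -blockE => hj e; exists j; rewrite hj e eqxx.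
Qed.

Lemma minimal_in_Pblock s i x : i < size al ->
  minimal_in (Pblock w al s i) x = prec_min (blk s i) (w x).
Proof.
move=> hi; rewrite /minimal_in /prec_min mem_Pblock //; congr andb.
apply/forallP/allP => [h c cb|h z].
  by have := h (v c); rewrite mem_Pblock // vK cb /= /label_prec wK.
by apply/implyP; rewrite mem_Pblock // => /h; rewrite /label_prec !wK.
Qed.

Lemma des_outE (s : 'S_n) : des_out al s = count (fun p => (p \notin S_alpha al) &&
  (nth 0 (oneline_seq s) p < nth 0 (oneline_seq s) p.-1)) (iota 1 n.-1).
Proof. by rewrite /des_out /Des count_filter. Qed.

Lemma blk_valley s i : unimodal al s -> i < size al ->
  exists k, valley_at (map val (blk s i)) k.
Proof.
rewrite unimodalE => /allP /(_ i); rewrite mem_iota add0n => h hi.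
by case/existsP: (h hi) => k hk; exists k.
Qed.

Lemma blk_prec_ordered s i : linext w s -> i < size al -> prec_ordered (blk s i).
Proof.
rewrite linextE => /forallP h hi a c ab cb pac.
have := h (v a) => /forallP /(_ (v c)) /implyP /(_ pac); rewrite !vK.
have u := uniq_word s; rewrite (word_split s i) in u *.
by rewrite !index_mid // ltn_add2l.
Qed.

Definition des_outside (s : 'S_n) i :=
  count (fun p => ((p \notin S_alpha al) && (nth 0 (oneline_seq s) p < nth 0 (oneline_seq s) p.-1))
    && ~~ (blk_start al i < p < blk_start al i + blk_size al i)) (iota 1 n.-1).

Lemma des_out_split s i : i < size al ->
  des_out al s = descents (map val (blk s i)) + des_outside s i.
Proof.
move=> hi; rewrite des_outE (count_andC _ (fun p => blk_start al i < p < blk_start al i + blk_size al i)).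
congr (_ + _); have hb := blk_size_gt0 comp hi; have he := blk_end_leq comp hi.
rewrite (eq_in_count (a2 := fun p => (blk_start al i < p < blk_start al i + blk_size al i) &&
   (nth 0 (oneline_seq s) p < nth 0 (oneline_seq s) p.-1))); last first.
  move=> p _ /=; case q: (blk_start al i < p < _); rewrite ?andbF ?andbT //.
  by rewrite (interior_notin_S_alpha comp hi q).
rewrite count_iota_window // /descents size_map size_blk //.
rewrite -[(blk_start al i).+1]addn0 iotaDl count_map; apply: eq_in_count => r.
rewrite mem_iota => /andP[_ hr] /=; rewrite val_blk !nth_take_drop; try lia.
by rewrite addSn addnS.
Qed.

Lemma unique_min_prec_min s j : j < size al -> unique_min (Pblock w al s j) ->
  forall a c, prec_min (blk s j) a -> prec_min (blk s j) c -> a = c.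
Proof.
move=> hj /existsP[x /andP[_ /forallP h]] a c ha hc.
have := h (v a); rewrite minimal_in_Pblock // vK ha => /eqP ea.
have := h (v c); rewrite minimal_in_Pblock // vK hc => /eqP ec.
by rewrite -(vK a) -(vK c) ea ec.
Qed.

Lemma des_out_star s : inLstar w al s -> des_out al s = 0.
Proof.
case/andP=> /andP[hlin huni] /allP hu; rewrite des_outE; apply/eqP; rewrite -leqn0 leqNgt -has_count.
apply/hasPn => p; rewrite mem_iota => hpi; apply/negP=> /andP[pS hdesc].
have hp : 0 < p < n by lia.
have [j hj hjp] := notin_S_alpha_interior comp hp pS.
have [k hk] := blk_valley huni hj.
have pn : p < n by lia.
have huj : unique_min (Pblock w al s j) by apply: hu; rewrite mem_iota.
have k0 := unique_prec_min_valley0 label_prec_lt (Ordinal pn) (uniq_blk s j) hk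
  (blk_prec_ordered hlin hj) (unique_min_prec_min hj huj).
rewrite k0 in hk; case/andP: hk => _; rewrite drop0 => /(sortedP 0) /(_ (p - (blk_start al j).+1)).
have he := blk_end_leq comp hj.
rewrite size_map size_blk // => /(_ ltac:(lia)).
rewrite val_blk !nth_take_drop; try lia.
have -> : blk_start al j + (p - (blk_start al j).+1) = p.-1 by lia.
have -> : blk_start al j + (p - (blk_start al j).+1).+1 = p by lia.
by move=> /= h; move: hdesc; rewrite ltnNge (ltnW h).
Qed.

Section ReplaceBlock.
Variables (s s' : 'S_n) (i : nat) (b : seq 'I_n).
Hypothesis hi : i < size al.
Hypothesis word_s' : word s' = splice (word s) (blk_start al i) (blk_size al i) b.
Hypothesis perm_b : perm_eq b (blk s i).

Lemma size_replacement : size b = blk_size al i.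
Proof. by rewrite (perm_size perm_b) size_blk. Qed.

Lemma blk_end_word : blk_start al i + blk_size al i <= size (word s).
Proof. by rewrite size_word; exact: (blk_end_leq comp). Qed.

Lemma blk_replaced : blk s' i = b.
Proof. by rewrite /blk word_s' (take_drop_splice blk_end_word size_replacement). Qed.

Lemma blk_unchanged j : j < size al -> j != i -> blk s' j = blk s j.
Proof.
move=> hj nji; have n0 : 0 < n by have := blk_size_gt0 comp hi; have := blk_end_leq comp hi; lia.
rewrite /blk word_s' (take_drop_splice_disjoint blk_end_word size_replacement (Ordinal n0)).
- by [].
- by rewrite size_word; exact: (blk_end_leq comp hj).
- exact: blocks_disjoint.
Qed.

Lemma Pblock_replaced j : j < size al -> Pblock w al s' j = Pblock w al s j.
Proof.
move=> hj; apply/setP=> x; rewrite !mem_Pblock //.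
by case: (eqVneq j i) => [->|nji]; rewrite ?blk_replaced ?(perm_mem perm_b) ?blk_unchanged.
Qed.

Lemma des_outside_replaced : des_outside s' i = des_outside s i.
Proof.
apply: eq_in_count => p; rewrite mem_iota => hpi /=.
case pS: (p \in S_alpha al) => //=.
case q: (blk_start al i < p < blk_start al i + blk_size al i); rewrite ?andbF ?andbT //.
have hp : 0 < p < n by lia.
have [j hj hjp] := notin_S_alpha_interior comp hp (negbT pS).
have nji : j != i by apply/eqP => e; move: q; rewrite -e hjp.
have hend : blk_start al i + blk_size al i <= size (oneline_seq s).
  by rewrite size_oneline_seq; exact: (blk_end_leq comp hi).
have hsize : size (map val b) = blk_size al i by rewrite size_map size_replacement.
rewrite !oneline_seqE word_s' map_splice -!oneline_seqE.
by rewrite !(nth_splice_out hend hsize) //; move: (blocks_disjoint hi hj nji) hjp; lia.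
Qed.

Lemma inLalpha_replaced k : inLalpha w al s -> valley_at (map val b) k -> prec_ordered b ->
  inLalpha w al s'.
Proof.
case/andP=> hlin huni hvb hordb; apply/andP; split.
- rewrite linextE; apply/forallP=> x; apply/forallP=> y; apply/implyP=> xy.
  move: hlin; rewrite linextE => /forallP /(_ x) /forallP /(_ y) /implyP /(_ xy).
  rewrite (word_split s i) word_s' /splice; apply: index_replace_mid.
  + by move=> z; rewrite (perm_mem perm_b).
  + by rewrite size_replacement size_blk.
  + by move=> xb yb; apply: hordb; rewrite ?(perm_mem perm_b) // /label_prec !wK.
- rewrite unimodalE; apply/allP=> j; rewrite mem_iota add0n => hj; apply/existsP.
  have [k' hk'] : exists k', valley_at (map val (blk s' j)) k'.
    case: (eqVneq j i) => [->|nji]; first by exists k; rewrite blk_replaced.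
    by rewrite blk_unchanged //; exact: blk_valley.
  exists (inord k'); rewrite inordK //.
  case/andP: hk' => /andP[+ _] _; rewrite size_map size_blk // => h.
  by have := blk_end_leq comp hj; lia.
Qed.
End ReplaceBlock.

Definition first_bad (s : 'S_n) :=
  find (fun i => ~~ unique_min (Pblock w al s i)) (iota 0 (size al)).

(* A minimal element of the block other than its least label; one exists
   exactly when the minimal element of the block is not unique. *)
Definition pick_min s i :=
  [pick y | minimal_in (Pblock w al s i) y && (w y != least (blk s i) (w y))].

Definition flip_word s :=
  let i := first_bad s in
  if inLalpha w al s && (i < size al) then
    if pick_min s i is Some y then
      splice (word s) (blk_start al i) (blk_size al i) (toggle (blk s i) (w y))
    else word s
  else word s.

Definition flip s := perm_of_word (flip_word s).

Lemma first_bad_star s : inLstar w al s -> first_bad s = size al.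
Proof.
case/andP=> _ /allP hall; apply/eqP; rewrite eqn_leq -{1}(size_iota 0 (size al)) find_size.
by rewrite leqNgt -(size_iota 0 (size al)) -has_find; apply/hasPn => i /hall; rewrite negbK.
Qed.

Lemma first_bad_nstar s : inLalpha w al s -> ~~ inLstar w al s ->
  first_bad s < size al /\ ~~ unique_min (Pblock w al s (first_bad s)).
Proof.
move=> hL; rewrite /inLstar hL /= -has_predC => hbad.
have := nth_find 0 hbad; move: hbad; rewrite has_find size_iota => hlt.
by rewrite nth_iota.
Qed.

Lemma flip_star s : inLstar w al s -> flip s = s.
Proof. by move=> hs; rewrite /flip /flip_word first_bad_star // ltnn andbF wordK. Qed.

Lemma flip_notL s : ~~ inLalpha w al s -> flip s = s.
Proof. by move=> hs; rewrite /flip /flip_word (negbTE hs) wordK. Qed.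

Lemma pick_min_some s i : inLalpha w al s -> i < size al ->
  ~~ unique_min (Pblock w al s i) -> exists y, pick_min s i = Some y.
Proof.
case/andP=> hlin huni hi hnu; rewrite /pick_min; case: pickP => [y _|none]; first by exists y.
exfalso; have [k hk] := blk_valley huni hi.
have hk' : k < size (blk s i) by case/andP: hk => /andP[]; rewrite size_map.
have n0 : 0 < n by move: hk'; rewrite size_blk //; have := blk_end_leq comp hi; lia.
set m0 := nth (Ordinal n0) (blk s i) k.
have hm0 : minimal_in (Pblock w al s i) (v m0).
  by rewrite minimal_in_Pblock // vK; exact: (valley_prec_min label_prec_lt _ (uniq_blk s i) hk).
move: hnu => /existsPn /(_ (v m0)); rewrite hm0 /= => /forallPn [y].
rewrite negb_imply => /andP[hy nym]; have := none y; rewrite hy /=.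
rewrite (least_valley (w y) (uniq_blk s i) hk).1 (set_nth_default (Ordinal n0)) //.
by move=> /negbFE /eqP e; move: nym; rewrite /m0 -e wK eqxx.
Qed.

Lemma flip_toggle s : inLalpha w al s -> ~~ inLstar w al s ->
  exists y k, let i := first_bad s in
   [/\ i < size al, pick_min s i = Some y, valley_at (map val (blk s i)) k,
       prec_min (blk s i) (w y) && (w y != least (blk s i) (w y)) &
       word (flip s) = splice (word s) (blk_start al i) (blk_size al i) (toggle (blk s i) (w y))].
Proof.
move=> hL hnstar; have [hi hnu] := first_bad_nstar hL hnstar.
have [y hy] := pick_min_some hL hi hnu.
have [k hk] := blk_valley (andP hL).2 hi.
exists y, k; move: (hy); rewrite /pick_min; case: pickP => [y' /andP[hmin hne] [e]|] //.
rewrite e -minimal_in_Pblock // in hmin hne *; rewrite hmin hne; split=> //.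
rewrite /flip /flip_word hL hi hy /= perm_of_wordK //.
  by rewrite (perm_uniq (perm_splice _)) ?uniq_word ?perm_toggle.
have hend : blk_start al (first_bad s) + blk_size al (first_bad s) <= size (word s).
  by rewrite size_word; exact: (blk_end_leq comp hi).
by rewrite size_splice // ?size_word // (perm_size (perm_toggle _ _)) size_blk.
Qed.

Lemma flip_inLalpha s : inLalpha w al s -> inLalpha w al (flip s).
Proof.
move=> hL; case hstar: (inLstar w al s); first by rewrite flip_star.
have [y [k [hi hy hk /andP[hmn hne] hword]]] := flip_toggle hL (negbT hstar).
have hord := blk_prec_ordered (andP hL).1 hi.
apply: (inLalpha_replaced hi hword (perm_toggle _ _) hL (valley_toggle (uniq_blk s _) hk hne)).
exact: (toggle_prec_ordered label_prec_lt (uniq_blk s _) hk hord hmn).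
Qed.

Lemma odd_des_out_flip s : inLalpha w al s -> ~~ inLstar w al s ->
  odd (des_out al (flip s)) = ~~ odd (des_out al s).
Proof.
move=> hL hnstar.
have [y [k [hi hy hk /andP[hmn hne] hword]]] := flip_toggle hL hnstar.
have hperm := perm_toggle (blk s (first_bad s)) (w y).
rewrite (des_out_split (flip s) hi) (des_out_split s hi) (des_outside_replaced hi hword hperm).
rewrite (blk_replaced hi hword hperm) (descents_valley (valley_toggle (uniq_blk s _) hk hne)).
rewrite (descents_valley hk) !oddD (odd_toggle (uniq_blk s _) hk hmn).
by case: (odd k); case: (odd (des_outside s (first_bad s))).
Qed.

Lemma flipK : involutive flip.
Proof.
move=> s; case hL: (inLalpha w al s); last by rewrite !flip_notL ?hL.
case hstar: (inLstar w al s); first by rewrite !flip_star.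
have [y [k [hi hy hk /andP[hmn hne] hword]]] := flip_toggle hL (negbT hstar).
have hperm := perm_toggle (blk s (first_bad s)) (w y).
have hbad : first_bad (flip s) = first_bad s.
  apply: eq_in_find => j; rewrite mem_iota add0n => /andP[_ hj].
  by rewrite (Pblock_replaced hi hword hperm hj).
have hpick : pick_min (flip s) (first_bad s) = pick_min s (first_bad s).
  apply: eq_pick => y0; rewrite (Pblock_replaced hi hword hperm hi) (blk_replaced hi hword hperm).
  by rewrite (least_perm _ hperm).
rewrite /flip {1}/flip_word flip_inLalpha // hbad hi hpick hy /= -/(flip s) hword.
rewrite (blk_replaced hi hword hperm) (toggleK (uniq_blk s _) hk hne).
by rewrite splice_splice ?(size_replacement hi hperm) ?blk_end_word // splice_take_drop wordK.
Qed.
End LinearExtensions.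

Theorem theorem2p8 (d : Order.disp_t) (T : finPOrderType d) (n : nat)
    (w : T -> 'I_n) (al : seq nat) :
  bijective w -> natural_labeling w -> is_composition n al ->
  (\sum_(s : 'S_n | inLalpha w al s) (-1) ^+ (des_out al s) : int)%R
    = Posz #|[set s : 'S_n | inLstar w al s]|.
Proof.
case=> v wK vK natw comp.
apply: (sum_sign_involution (g := flip w al)).
- exact: flipK wK vK natw comp.
- exact: flip_inLalpha wK vK natw comp.
- by move=> s /andP[].
- exact: flip_star.
- exact: des_out_star wK vK natw comp.
- exact: odd_des_out_flip wK vK natw comp.
Qed.
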